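(* Let $P(z)=\sum_{j=0}^{n}a_jz^j$ be a complex polynomial of degree $n\ge 1$ (so $a_n\neq 0$), and let $a,b,c,u,v,w$ be arbitrary positive real numbers. Then every zero $z$ of $P$ satisfies $r_1\le |z|\le r_2$, where $$r_1=\frac{uv+2w}{uvw+w^2}\,\min_{1\le k\le n}\left\{\frac{(uvw+w^2)^n\,u^{\xi(k)}\,(uv)^{\lfloor k/2\rfloor}\,F_k^{(u,v,w)}\binom{n}{k}}{F_{4n}^{(u,v,w)}}\left|\frac{a_0}{a_k}\right|\right\}^{1/k},$$ $$r_2=\frac{abc+c^2}{ab+2c}\,\max_{1\le k\le n}\left\{\frac{F_{4n}^{(a,b,c)}}{(abc+c^2)^n\,a^{\xi(k)}\,(ab)^{\lfloor k/2\rfloor}\,F_k^{(a,b,c)}\binom{n}{k}}\left|\frac{a_{n-k}}{a_n}\right|\right\}^{1/k}.$$ (In the minimum defining $r_1$, indices $k$ with $a_k=0$ are omitted; since $a_n\neq0$ the minimum is over a nonempty set. In particular $r_1=0$ if $a_0=0$.)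
   Context: For positive real numbers $a,b,c$, the generalized Fibonacci numbers $F_m^{(a,b,c)}$ are defined by $F_0^{(a,b,c)}=0$, $F_1^{(a,b,c)}=1$, and for $m\ge 2$: $F_m^{(a,b,c)}=a\,F_{m-1}^{(a,b,c)}+c\,F_{m-2}^{(a,b,c)}$ if $m$ is even, and $F_m^{(a,b,c)}=b\,F_{m-1}^{(a,b,c)}+c\,F_{m-2}^{(a,b,c)}$ if $m$ is odd. For an integer $k$, $\lfloor k/2\rfloor$ denotes the floor of $k/2$ and $\xi(k):=k-2\lfloor k/2\rfloor$ (i.e. $0$ if $k$ is even, $1$ if $k$ is odd). *)

(* Complex numbers: an arbitrary numClosedFieldType C
   (e.g. algC); positive reals are elements x of C with 0 < x. *)
From HB Require Import structures.
From mathcomp Require Import all_boot all_order all_algebra.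
Set Implicit Arguments. Unset Strict Implicit. Unset Printing Implicit Defensive.
Import Order.TTheory GRing.Theory Num.Theory.
Local Open Scope ring_scope.

Fixpoint gfib {C : numClosedFieldType} (a b c : C) (m : nat) : C :=
  match m with
  | 0 => 0
  | 1 => 1
  | S ((S k) as m1) => (if odd m then b else a) * gfib a b c m1 + c * gfib a b c k
  end.

Definition xi (k : nat) : nat := k - 2 * k./2.

Definition r1_term {C : numClosedFieldType} (p : {poly C}) (n : nat) (u v w : C) (k : nat) : C :=
  k.-root (((u * v * w + w ^+ 2) ^+ n * u ^+ xi k * (u * v) ^+ k./2
             * gfib u v w k * ('C(n, k))%:R / gfib u v w (4 * n))
            * `|p`_0 / p`_k|).

Definition r2_term {C : numClosedFieldType} (p : {poly C}) (n : nat) (a b c : C) (k : nat) : C :=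
  k.-root ((gfib a b c (4 * n) /
             ((a * b * c + c ^+ 2) ^+ n * a ^+ xi k * (a * b) ^+ k./2
              * gfib a b c k * ('C(n, k))%:R))
            * `|p`_(n - k) / p`_n|).

(* r1: min over 1 <= k <= n with a_k <> 0 (nonempty since a_n <> 0; the seed
   value r1_term n is itself one of the terms, so it does not change the min). *)
Definition r1 {C : numClosedFieldType} (p : {poly C}) (n : nat) (u v w : C) : C :=
  (u * v + 2 * w) / (u * v * w + w ^+ 2) *
  foldr Num.min (r1_term p n u v w n)
        [seq r1_term p n u v w k | k <- iota 1 n & p`_k != 0].

(* r2: max over 1 <= k <= n (seed r1_term 1 is one of the terms). *)
Definition r2 {C : numClosedFieldType} (p : {poly C}) (n : nat) (a b c : C) : C :=
  (a * b * c + c ^+ 2) / (a * b + 2 * c) *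
  foldr Num.max (r2_term p n a b c 1)
        [seq r2_term p n a b c k | k <- iota 1 n].

From HB Require Import structures.
From mathcomp Require Import all_boot all_order all_algebra.
From mathcomp Require Import ring.
Set Implicit Arguments. Unset Strict Implicit. Unset Printing Implicit Defensive.
Import Order.TTheory GRing.Theory Num.Theory.
Local Open Scope ring_scope.

(* Write s = ab + 2c, t = abc + c^2 and G_k = a^xi(k) (ab)^(k/2) F_k.  The
   heart of the matter is the binomial identity
       sum_(k <= n) C(n,k) s^k t^(n-k) G_k = F_(4n),
   proved with Binet's formula: if x is a root of X^2 = ab X + abc then
   t + s x = x^4 / (ab)^2.  Dividing by F_(4n), the numbers
   lambda_k = C(n,k) s^k t^(n-k) G_k / F_(4n) (1 <= k <= n) sum to 1.

   Two Cauchy-type estimates, valid over any numDomainType, then do the rest: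
   if |a_(n-k)| <= |a_n| lambda_k rho^k for all k, every zero has |z| <= rho,
   and if |a_k| rho^k <= |a_0| lambda_k for all k, every zero has rho <= |z|.
   The k-th terms of r2 and r1 are exactly the k-th roots that make these
   hypotheses hold for rho = r2 and rho = r1 respectively. *)

Lemma expr_shift (R : numDomainType) (x y : R) k :
  0 <= x -> x <= y -> (0 < k)%N -> x ^+ k * y <= x * y ^+ k.
Proof.
move=> x_ge0 le_xy; case: k => // k _.
have y_ge0 := le_trans x_ge0 le_xy.
rewrite exprS exprSr -mulrA; apply: ler_wpM2l => //.
by apply: ler_wpM2r => //; rewrite lerXn2r.
Qed.

Lemma rootC_le_expr (C : numClosedFieldType) k (x y : C) :
  (0 < k)%N -> 0 <= x -> 0 <= y -> (k.-root x <= y) = (x <= y ^+ k).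
Proof.
move=> k_gt0 x_ge0 y_ge0.
by rewrite -{1}(exprCK k_gt0 y_ge0) ler_rootC // nnegrE exprn_ge0.
Qed.

Lemma expr_le_rootC (C : numClosedFieldType) k (x y : C) :
  (0 < k)%N -> 0 <= x -> 0 <= y -> (y <= k.-root x) = (y ^+ k <= x).
Proof.
move=> k_gt0 x_ge0 y_ge0.
by rewrite -{1}(exprCK k_gt0 y_ge0) ler_rootC // nnegrE exprn_ge0.
Qed.

Lemma foldr_max_mem (R : numDomainType) (x0 : R) s : foldr Num.max x0 s \in x0 :: s.
Proof.
elim: s => [|y s IH] /=; first exact: mem_head.
rewrite /Order.max; case: ifP => _; last by rewrite !inE eqxx orbT.
by move: IH; rewrite !inE => /orP [->|->]; rewrite ?orbT.
Qed.

Lemma foldr_min_mem (R : numDomainType) (x0 : R) s : foldr Num.min x0 s \in x0 :: s.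
Proof.
elim: s => [|y s IH] /=; first exact: mem_head.
rewrite /Order.min; case: ifP => _; first by rewrite !inE eqxx orbT.
by move: IH; rewrite !inE => /orP [->|->]; rewrite ?orbT.
Qed.

Lemma mem_cons2 (T : eqType) (x0 z y : T) s :
  (y \in x0 :: z :: s) = (y == z) || (y \in x0 :: s).
Proof. by rewrite !inE orbCA. Qed.

Lemma foldr_max_ub (R : numDomainType) (x0 : R) s :
  {subset x0 :: s <= Num.real} -> {in x0 :: s, forall y, y <= foldr Num.max x0 s}.
Proof.
elim: s => [|z s IH] real_s y; first by rewrite mem_seq1 => /eqP ->.
have real_tail : {subset x0 :: s <= Num.real}.
  by move=> u u_in; apply: real_s; rewrite mem_cons2 u_in orbT.
have z_real : z \is Num.real by apply: real_s; rewrite mem_cons2 eqxx.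
have max_real := real_tail _ (foldr_max_mem x0 s).
rewrite mem_cons2 /= comparable_le_max ?real_comparable //.
by case/predU1P => [-> | y_in]; rewrite ?lexx // IH ?orbT.
Qed.

Lemma foldr_min_lb (R : numDomainType) (x0 : R) s :
  {subset x0 :: s <= Num.real} -> {in x0 :: s, forall y, foldr Num.min x0 s <= y}.
Proof.
elim: s => [|z s IH] real_s y; first by rewrite mem_seq1 => /eqP ->.
have real_tail : {subset x0 :: s <= Num.real}.
  by move=> u u_in; apply: real_s; rewrite mem_cons2 u_in orbT.
have z_real : z \is Num.real by apply: real_s; rewrite mem_cons2 eqxx.
have min_real := real_tail _ (foldr_min_mem x0 s).
rewrite mem_cons2 /= comparable_ge_min ?real_comparable //.
by case/predU1P => [-> | y_in]; rewrite ?lexx // IH ?orbT.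
Qed.

Section CauchyTypeBounds.
Variables (R : numDomainType) (p : {poly R}) (n : nat) (lambda : nat -> R).
Hypotheses (size_p : size p = n.+1)
  (lambda_sum : \sum_(1 <= k < n.+1) lambda k <= 1).

Lemma lead_coef_norm_gt0 : 0 < `|p`_n|.
Proof.
have p_neq0 : p != 0 by rewrite -size_poly_gt0 size_p.
by rewrite normr_gt0 -[n]/(n.+1.-1) -size_p -lead_coefE lead_coef_eq0.
Qed.

Lemma root_lead_coef_le z : root p z ->
  `|p`_n| * `|z| ^+ n <= \sum_(i < n) `|p`_i| * `|z| ^+ i.
Proof.
move=> /rootP; rewrite horner_coef size_p big_ord_recr /= addrC => /eqP.
rewrite addr_eq0 => /eqP top; rewrite -normrX -normrM top normrN.
rewrite (le_trans (ler_norm_sum _ _ _)) //.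
by apply: ler_sum => i _; rewrite normrM normrX.
Qed.

Lemma root_const_coef_le z : root p z ->
  `|p`_0| <= \sum_(i < n) `|p`_i.+1| * `|z| ^+ i.+1.
Proof.
move=> /rootP; rewrite horner_coef size_p big_ord_recl expr0 mulr1 => /eqP.
rewrite addr_eq0 => /eqP ->; rewrite normrN (le_trans (ler_norm_sum _ _ _)) //.
by apply: ler_sum => i _; rewrite normrM normrX.
Qed.

Lemma root_norm_le (rho : R) : (forall k, 0 <= lambda k) -> 0 <= rho ->
    (forall k, (0 < k <= n)%N -> `|p`_(n - k)| <= `|p`_n| * lambda k * rho ^+ k) ->
  forall z, root p z -> `|z| <= rho.
Proof.
move=> lambda_ge0 rho_ge0 coef_le z /root_lead_coef_le top_le; set A := `|z|.
rewrite (real_leNgt (normr_real z) (ger0_real rho_ge0)); apply/negP => lt_rho_A.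
have A_gt0 : 0 < A := le_lt_trans rho_ge0 lt_rho_A.
have term_le (i : 'I_n) :
    A * (`|p`_i| * A ^+ i) <= `|p`_n| * rho * A ^+ n * lambda (n - i).
  have le_in : (i <= n)%N := ltnW (ltn_ord i).
  have k_gt0 : (0 < n - i)%N by rewrite subn_gt0.
  have /coef_le : (0 < n - i <= n)%N by rewrite k_gt0 leq_subr.
  rewrite subKn // => coef.
  have shift := expr_shift rho_ge0 (ltW lt_rho_A) k_gt0.
  apply: (le_trans (ler_wpM2l (ltW A_gt0) (ler_wpM2r (exprn_ge0 i (ltW A_gt0)) coef))).
  have lhsE : A * (`|p`_n| * lambda (n - i) * rho ^+ (n - i) * A ^+ i) =
      `|p`_n| * lambda (n - i) * (rho ^+ (n - i) * A * A ^+ i) by ring.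
  have rhsE : `|p`_n| * rho * A ^+ n * lambda (n - i) =
      `|p`_n| * lambda (n - i) * (rho * A ^+ (n - i) * A ^+ i).
    by rewrite -[in A ^+ n](subnK le_in) exprD; ring.
  by rewrite lhsE rhsE ler_wpM2l ?mulr_ge0 // ler_wpM2r ?exprn_ge0 // ltW.
have weights_rev : \sum_(i < n) lambda (n - i) <= 1.
  by move: lambda_sum; rewrite big_rev_mkord subn1.
have top_gt0 : 0 < `|p`_n| * A ^+ n by rewrite mulr_gt0 ?exprn_gt0 ?lead_coef_norm_gt0.
have : `|p`_n| * A ^+ n * A <= `|p`_n| * A ^+ n * rho.
  rewrite mulrC (le_trans (ler_wpM2l (ltW A_gt0) top_le)) // mulr_sumr.
  rewrite (le_trans (ler_sum _ (fun i _ => term_le i))) // -mulr_sumr.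
  rewrite [X in X <= _](_ : _ = `|p`_n| * A ^+ n * rho * \sum_(i < n) lambda (n - i)).
    by rewrite ler_piMr // mulr_ge0 // ltW.
  ring.
by rewrite ler_pM2l // => /(lt_le_trans lt_rho_A); rewrite ltxx.
Qed.

Lemma root_norm_ge (rho : R) : (0 < n)%N -> 0 <= rho ->
    (forall k, (0 < k <= n)%N -> `|p`_k| * rho ^+ k <= `|p`_0| * lambda k) ->
  forall z, root p z -> rho <= `|z|.
Proof.
move=> n_gt0 rho_ge0 coef_le z /root_const_coef_le bottom_le; set A := `|z|.
rewrite (real_leNgt (ger0_real rho_ge0) (normr_real z)); apply/negP => lt_A_rho.
have A_ge0 : 0 <= A := normr_ge0 z.
have term_le (i : 'I_n) :
    rho * (`|p`_i.+1| * A ^+ i.+1) <= A * `|p`_0| * lambda i.+1.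
  have /coef_le coef : (0 < i.+1 <= n)%N by rewrite ltn_ord.
  have shift := expr_shift A_ge0 (ltW lt_A_rho) (ltn0Sn i).
  apply: le_trans (_ : `|p`_i.+1| * (A * rho ^+ i.+1) <= _).
    by rewrite mulrCA ler_wpM2l // mulrC.
  by rewrite mulrCA -mulrA ler_wpM2l.
(* Summing up gives rho |a_0| <= |z| |a_0|, hence a_0 = 0 ... *)
have : rho * `|p`_0| <= A * `|p`_0|.
  rewrite (le_trans (ler_wpM2l rho_ge0 bottom_le)) // mulr_sumr.
  rewrite (le_trans (ler_sum _ (fun i _ => term_le i))) // -mulr_sumr.
  by rewrite ler_piMr ?mulr_ge0 //; move: lambda_sum; rewrite big_add1 big_mkord.
have [p0_eq0 | p0_neq0] := eqVneq `|p`_0| 0; last first.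
  have p0_gt0 : 0 < `|p`_0| by rewrite lt0r p0_neq0 normr_ge0.
  by rewrite ler_pM2r // => /(lt_le_trans lt_A_rho); rewrite ltxx.
(* ... which contradicts the bound for k = n, since a_n != 0 and rho > 0. *)
have /coef_le : (0 < n <= n)%N by rewrite n_gt0 leqnn.
have top_gt0 : 0 < `|p`_n| * rho ^+ n.
  by rewrite mulr_gt0 ?exprn_gt0 ?lead_coef_norm_gt0 // (le_lt_trans A_ge0).
by rewrite p0_eq0 mul0r => /(lt_le_trans top_gt0); rewrite ltxx.
Qed.
End CauchyTypeBounds.

Section GeneralizedFibonacci.
Variables (C : numClosedFieldType) (a b c : C).
Hypotheses (a_gt0 : 0 < a) (b_gt0 : 0 < b) (c_gt0 : 0 < c).

Local Notation F := (gfib a b c).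
Local Notation s := (a * b + 2 * c).
Local Notation t := (a * b * c + c ^+ 2).

Lemma gfibSS k : F k.+2 = (if odd k then b else a) * F k.+1 + c * F k.
Proof. by rewrite /= negbK. Qed.

Lemma xiE k : xi k = odd k.
Proof. by rewrite /xi -{1}(odd_double_half k) mul2n addnK. Qed.

Lemma gfib_pos k : 0 <= F k /\ 0 < F k.+1.
Proof.
elim: k => [|k [F_ge0 F_gt0]]; first by rewrite /= lexx ltr01.
split; first exact: ltW.
rewrite gfibSS; apply: ltr_wpDr; first by rewrite mulr_ge0 // ltW.
by rewrite mulr_gt0 //; case: (odd k).
Qed.

Lemma gfib4n_gt0 n : (0 < n)%N -> 0 < F (4 * n).
Proof.
move=> n_gt0; rewrite -(@prednK (4 * n)) ?muln_gt0 ?n_gt0 //.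
by case: (gfib_pos (4 * n).-1).
Qed.

(* G_k = a^xi(k) (ab)^(k/2) F_k removes the parity dependence of the
   recurrence: G satisfies the constant-coefficient G_(k+2) = ab G_(k+1) + abc G_k. *)
Definition gfib_scaled k := a ^+ xi k * (a * b) ^+ k./2 * F k.

Local Notation G := gfib_scaled.

Lemma gfib_scaled0 : G 0 = 0. Proof. by rewrite /G /= mulr0. Qed.

Lemma gfib_scaled1 : G 1 = a. Proof. by rewrite /G xiE /= expr1 expr0 !mulr1. Qed.

Lemma gfib_scaledSS k : G k.+2 = a * b * G k.+1 + a * b * c * G k.
Proof.
rewrite /G !xiE gfibSS /= negbK uphalf_half.
by case: (odd k); rewrite /= ?add0n ?add1n !exprS; ring.
Qed.

Lemma gfib_scaled_gt0 k : 0 < G k.+1.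
Proof. by rewrite /G !mulr_gt0 ?exprn_gt0 ?mulr_gt0 //; case: (gfib_pos k). Qed.

Lemma gfib_scaled_ge0 k : 0 <= G k.
Proof. by case: k => [|k]; rewrite ?gfib_scaled0 // ltW ?gfib_scaled_gt0. Qed.

Lemma gfib_scaled_mul4 m : G (4 * m) = (a * b) ^+ (2 * m) * F (4 * m).
Proof.
have half4m : (4 * m)./2 = (2 * m)%N by rewrite -[4%N]/(2 * 2)%N -mulnA mul2n doubleK.
by rewrite /G xiE oddM /= half4m expr0 mul1r.
Qed.

Lemma gfib_binet x y k :
    x ^+ 2 = a * b * x + a * b * c -> y ^+ 2 = a * b * y + a * b * c ->
  (x - y) * G k = a * (x ^+ k - y ^+ k).
Proof.
move=> x_root y_root.
suff [] : (x - y) * G k = a * (x ^+ k - y ^+ k) /\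
          (x - y) * G k.+1 = a * (x ^+ k.+1 - y ^+ k.+1) by [].
elim: k => [|k [IHk IHk1]].
  by rewrite gfib_scaled0 gfib_scaled1 !expr0 !expr1 subrr !mulr0 mulrC.
split=> //; rewrite gfib_scaledSS.
transitivity (a * b * ((x - y) * G k.+1) + a * b * c * ((x - y) * G k)); first ring.
by rewrite IHk1 IHk -[k.+2]addn2 !exprD x_root y_root !exprS; ring.
Qed.

(* The characteristic polynomial X^2 - ab X - abc has two distinct roots,
   since its discriminant (ab)^2 + 4abc is positive. *)
Lemma gfib_char_roots : exists x y : C,
  [/\ x ^+ 2 = a * b * x + a * b * c, y ^+ 2 = a * b * y + a * b * c & x != y].
Proof.
pose D := (a * b) ^+ 2 + 4 * (a * b * c); pose d := sqrtC D.
have D_gt0 : 0 < D by rewrite addr_gt0 ?exprn_gt0 ?mulr_gt0 ?ltr0n.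
have two_neq0 : (2 : C) != 0 by rewrite pnatr_eq0.
have char_root (e : C) : e ^+ 2 = D ->
    ((a * b + e) / 2) ^+ 2 = a * b * ((a * b + e) / 2) + a * b * c.
  move=> e_sq; apply/eqP; rewrite -subr_eq0; apply/eqP.
  transitivity ((e ^+ 2 - D) / 4); last by rewrite e_sq subrr mul0r.
  by rewrite /D; field.
exists ((a * b + d) / 2), ((a * b + - d) / 2); split.
- exact/char_root/sqrtCK.
- by apply: char_root; rewrite sqrrN sqrtCK.
rewrite (can_eq (divfK two_neq0)) (inj_eq (addrI _)) -subr_eq0 opprK -mulr2n.
by rewrite mulrn_eq0 /= sqrtC_eq0 gt_eqF.
Qed.

Lemma gfib_char_root_shift x : x ^+ 2 = a * b * x + a * b * c ->
  t + s * x = x ^+ 4 / (a * b) ^+ 2.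
Proof.
move=> x_root; have ab_neq0 : (a * b) ^+ 2 != 0 by rewrite expf_neq0 // gt_eqF ?mulr_gt0.
have -> : x ^+ 4 = (x ^+ 2) ^+ 2 by rewrite -exprM.
apply: (mulIf ab_neq0); rewrite divfK // [in RHS]x_root.
apply/eqP; rewrite -subr_eq0; apply/eqP.
transitivity ((a * b) ^+ 2 * (a * b * x + a * b * c - x ^+ 2)); first ring.
by rewrite x_root subrr mulr0.
Qed.

(* The binomial identity sum_k C(n,k) s^k t^(n-k) G_k = F_(4n): by Binet, the
   left side times (x - y) is a ((t + s x)^n - (t + s y)^n). *)
Lemma gfib_binomial n :
  \sum_(k < n.+1) 'C(n, k)%:R * s ^+ k * t ^+ (n - k) * G k = F (4 * n).
Proof.
have [x [y [x_root y_root x_neq_y]]] := gfib_char_roots.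
have ab_neq0 : (a * b) ^+ (2 * n) != 0 by rewrite expf_neq0 // gt_eqF ?mulr_gt0.
have xy_neq0 : x - y != 0 by rewrite subr_eq0.
have binomial_side e : (t + s * e) ^+ n =
    \sum_(k < n.+1) 'C(n, k)%:R * s ^+ k * t ^+ (n - k) * e ^+ k.
  by rewrite exprDn; apply: eq_bigr => k _; rewrite exprMn mulr_natl; ring.
apply: (mulfI xy_neq0); rewrite mulr_sumr.
transitivity (a * ((t + s * x) ^+ n - (t + s * y) ^+ n)).
  rewrite !binomial_side -sumrB mulr_sumr; apply: eq_bigr => k _.
  by rewrite -mulrBr mulrCA gfib_binet //; ring.
rewrite (gfib_char_root_shift x_root) (gfib_char_root_shift y_root).
rewrite !expr_div_n -!exprM -mulrBl mulrA -(gfib_binet _ x_root y_root).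
by rewrite gfib_scaled_mul4 [_ * F _]mulrC mulrA mulfK.
Qed.

Lemma fib_ratio_gt0 : 0 < s / t.
Proof. by rewrite divr_gt0 ?addr_gt0 ?mulr_gt0 ?exprn_gt0 ?ltr0n. Qed.

(* Normalising the binomial identity by F_(4n) gives weights lambda_1, ...,
   lambda_n of total mass 1 (lambda_0 vanishes because G_0 = 0). *)
Definition fib_weight n k := 'C(n, k)%:R * s ^+ k * t ^+ (n - k) * G k / F (4 * n).

Lemma fib_weight_ge0 n k : 0 <= fib_weight n k.
Proof.
have [s_ge0 t_ge0] : 0 <= s /\ 0 <= t.
  by split; rewrite ltW ?addr_gt0 ?mulr_gt0 ?exprn_gt0 ?ltr0n.
apply: divr_ge0; last exact: (gfib_pos _).1.
by apply: mulr_ge0 (gfib_scaled_ge0 k); rewrite !mulr_ge0 ?exprn_ge0.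
Qed.

Lemma fib_weight_sum n : (0 < n)%N -> \sum_(1 <= k < n.+1) fib_weight n k = 1.
Proof.
move=> n_gt0; have := gfib_binomial n.
rewrite big_ord_recl gfib_scaled0 mulr0 add0r => sum_eq.
rewrite big_add1 big_mkord /fib_weight -mulr_suml -sum_eq; apply: divff.
by rewrite sum_eq gt_eqF ?gfib4n_gt0.
Qed.

Definition fib_scale n k := t ^+ n * G k * 'C(n, k)%:R / F (4 * n).

Lemma fib_scale_ge0 n k : 0 <= fib_scale n k.
Proof.
have [-> | k_gt0] := posnP k; first by rewrite /fib_scale gfib_scaled0 !(mulr0, mul0r).
have [le_kn | lt_nk] := leqP k n; last by rewrite /fib_scale bin_small // !(mulr0, mul0r).
have t_ge0 : 0 <= t by rewrite ltW ?addr_gt0 ?mulr_gt0 ?exprn_gt0.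
rewrite divr_ge0 ?(gfib_pos _).1 // mulr_ge0 // mulr_ge0 ?exprn_ge0 //.
exact: gfib_scaled_ge0.
Qed.

Lemma fib_scale_gt0 n k : (0 < k <= n)%N -> 0 < fib_scale n k.
Proof.
case: k => // k /= le_kn; have n_gt0 : (0 < n)%N := leq_ltn_trans (leq0n k) le_kn.
rewrite divr_gt0 ?gfib4n_gt0 // mulr_gt0 ?ltr0n ?bin_gt0 // mulr_gt0 ?gfib_scaled_gt0 //.
by rewrite exprn_gt0 ?addr_gt0 ?mulr_gt0 ?exprn_gt0.
Qed.

Lemma fib_weightE n k : (k <= n)%N -> fib_weight n k = (s / t) ^+ k * fib_scale n k.
Proof.
move=> le_kn; have t_neq0 : t ^+ k != 0.
  by rewrite expf_neq0 // gt_eqF ?addr_gt0 ?mulr_gt0 ?exprn_gt0.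
rewrite /fib_weight /fib_scale -(subnK le_kn) exprD subnK // expr_div_n.
by move: t_neq0 (F (4 * n))^-1; move: (t ^+ k) => T T_neq0 Finv; field.
Qed.
End GeneralizedFibonacci.

Section FibonacciRootBounds.
Variables (C : numClosedFieldType) (p : {poly C}) (n : nat) (a b c : C).
Hypotheses (n_gt0 : (0 < n)%N) (size_p : size p = n.+1).
Hypotheses (a_gt0 : 0 < a) (b_gt0 : 0 < b) (c_gt0 : 0 < c).

Local Notation s := (a * b + 2 * c).
Local Notation t := (a * b * c + c ^+ 2).
Local Notation T := (fib_scale a b c n).
Local Notation lambda := (fib_weight a b c n).

Lemma r2_termE k : r2_term p n a b c k = k.-root (`|p`_(n - k)| / `|p`_n| / T k).
Proof. by rewrite /r2_term /fib_scale /gfib_scaled normf_div invf_div mulrC !mulrA. Qed.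

Lemma r1_termE k : r1_term p n a b c k = k.-root (T k * (`|p`_0| / `|p`_k|)).
Proof. by rewrite /r1_term /fib_scale /gfib_scaled normf_div !mulrA. Qed.

Lemma r2_term_ge0 k : (0 < k)%N -> 0 <= r2_term p n a b c k.
Proof. by move=> k_gt0; rewrite r2_termE rootC_ge0 // divr_ge0 ?fib_scale_ge0 ?divr_ge0. Qed.

Lemma r1_term_ge0 k : (0 < k)%N -> 0 <= r1_term p n a b c k.
Proof. by move=> k_gt0; rewrite r1_termE rootC_ge0 // mulr_ge0 ?fib_scale_ge0 ?divr_ge0. Qed.

Lemma r2_term_coef k (M : C) : (0 < k <= n)%N -> 0 <= M -> r2_term p n a b c k <= M ->
  `|p`_(n - k)| <= `|p`_n| * lambda k * (t / s * M) ^+ k.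
Proof.
move=> k_range M_ge0; case/andP: (k_range) => k_gt0 le_kn.
have T_gt0 : 0 < T k := fib_scale_gt0 a_gt0 b_gt0 c_gt0 k_range.
have pn_gt0 : 0 < `|p`_n| := lead_coef_norm_gt0 size_p.
have ratio_ge0 : 0 <= `|p`_(n - k)| / `|p`_n| / T k.
  by rewrite divr_ge0 ?(ltW T_gt0) // divr_ge0.
rewrite r2_termE rootC_le_expr // !ler_pdivrMr // => coef_le.
have q_neq0 : (s / t) ^+ k != 0 by rewrite expf_neq0 // gt_eqF ?fib_ratio_gt0.
have weightE : lambda k * (t / s * M) ^+ k = T k * M ^+ k.
  rewrite (fib_weightE a_gt0 b_gt0 c_gt0) // -[t / s]invf_div.
  by rewrite [(_ * M) ^+ k]exprMn exprVn mulrACA mulfV // mul1r.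
by rewrite -mulrA weightE mulrC [T k * _]mulrC.
Qed.

Lemma r1_term_coef k (m : C) : (0 < k <= n)%N -> 0 <= m -> p`_k != 0 ->
  m <= r1_term p n a b c k -> `|p`_k| * (s / t * m) ^+ k <= `|p`_0| * lambda k.
Proof.
move=> /andP [k_gt0 le_kn] m_ge0 pk_neq0.
have T_ge0 : 0 <= T k := fib_scale_ge0 a_gt0 b_gt0 c_gt0 n k.
have pk_gt0 : 0 < `|p`_k| by rewrite normr_gt0.
have rhs_ge0 : 0 <= T k * (`|p`_0| / `|p`_k|) by rewrite mulr_ge0 // divr_ge0.
rewrite r1_termE expr_le_rootC // mulrA ler_pdivlMr // => coef_le.
rewrite (fib_weightE a_gt0 b_gt0 c_gt0) // exprMn.
have lhsE : `|p`_k| * ((s / t) ^+ k * m ^+ k) = (s / t) ^+ k * (m ^+ k * `|p`_k|) by ring.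
have rhsE : `|p`_0| * ((s / t) ^+ k * T k) = (s / t) ^+ k * (T k * `|p`_0|) by ring.
rewrite lhsE rhsE; apply: ler_wpM2l => //.
by rewrite exprn_ge0 // ltW ?fib_ratio_gt0.
Qed.

Theorem upper_bound z : root p z -> `|z| <= r2 p n a b c.
Proof.
move=> root_z; rewrite /r2; set L := map _ _; set M := foldr _ _ _.
have terms_ge0 : {in r2_term p n a b c 1 :: L, forall y, 0 <= y}.
  move=> y; rewrite inE => /predU1P [-> | /mapP [k]]; first exact: r2_term_ge0.
  by rewrite mem_iota => /andP [k_ge1 _] ->; apply: r2_term_ge0.
have M_ge0 : 0 <= M by apply/terms_ge0/foldr_max_mem.
have ts_ge0 : 0 <= t / s by rewrite -invf_div invr_ge0 ltW ?fib_ratio_gt0.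
apply: (root_norm_le size_p _ (fib_weight_ge0 a_gt0 b_gt0 c_gt0 n) _ _ root_z).
- by rewrite (fib_weight_sum a_gt0 b_gt0 c_gt0).
- exact: mulr_ge0.
move=> k /[dup] k_range /andP [k_gt0 le_kn]; apply: r2_term_coef => //.
apply: foldr_max_ub; first by move=> y /terms_ge0 /ger0_real.
by rewrite inE map_f ?orbT // mem_iota k_gt0 add1n ltnS.
Qed.

Theorem lower_bound z : root p z -> r1 p n a b c <= `|z|.
Proof.
move=> root_z; rewrite /r1; set L := map _ _; set m := foldr _ _ _.
have terms_ge0 : {in r1_term p n a b c n :: L, forall y, 0 <= y}.
  move=> y; rewrite inE => /predU1P [-> | /mapP [k]]; first exact: r1_term_ge0.
  by rewrite mem_filter mem_iota => /and3P [_ k_ge1 _] ->; apply: r1_term_ge0.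
have m_ge0 : 0 <= m by apply/terms_ge0/foldr_min_mem.
apply: (root_norm_ge (lambda := lambda) size_p _ n_gt0 _ _ root_z).
- by rewrite (fib_weight_sum a_gt0 b_gt0 c_gt0).
- by rewrite mulr_ge0 // ltW ?fib_ratio_gt0.
move=> k /[dup] k_range /andP [k_gt0 le_kn].
have [pk_eq0 | pk_neq0] := eqVneq p`_k 0.
  by rewrite pk_eq0 normr0 mul0r mulr_ge0 ?fib_weight_ge0.
apply: r1_term_coef => //.
apply: foldr_min_lb; first by move=> y /terms_ge0 /ger0_real.
by rewrite inE map_f ?orbT // mem_filter pk_neq0 mem_iota k_gt0 add1n ltnS.
Qed.
End FibonacciRootBounds.

Unset Implicit Arguments.
Set Strict Implicit.

Theorem theorem1 (C : numClosedFieldType) (p : {poly C}) (n : nat)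
  (a b c u v w : C) :
  (1 <= n)%N -> size p = n.+1 ->
  0 < a -> 0 < b -> 0 < c -> 0 < u -> 0 < v -> 0 < w ->
  forall z : C, root p z ->
    r1 p n u v w <= `|z| <= r2 p n a b c.
Proof.
move=> n_gt0 size_p a_gt0 b_gt0 c_gt0 u_gt0 v_gt0 w_gt0 z root_z.
by rewrite lower_bound ?upper_bound.
Qed.
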